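(* For any $n\in\mathbb N^*$, any weight vector $\varpi$ for $\Gamma_n$ and any $\gamma\in\mathbb F^*$, the graph $\gamma\Gamma_n^\varpi$ has the Kahan-Poisson property.
   Context: $\mathbb F\in\{\mathbb R,\mathbb C\}$. A skew-symmetric graph is $\Gamma=(S,A)$, $S=\{1,\dots,n\}$, $A=(a_{i,j})$ skew-symmetric over $\mathbb F$. Its Poisson bracket on $\mathbb F(x)$ is $\{x_i,x_j\}=a_{i,j}x_ix_j$; its Kahan morphism (step size 1) is $K(x_i)=\tilde x_i$ with $\tilde x_i$ the unique solution of $\tilde x_i-x_i=\tilde x_i\sum_ja_{i,j}x_j+x_i\sum_ja_{i,j}\tilde x_j$; $\Gamma$ has the Kahan-Poisson property if $\{\tilde x_i,\tilde x_j\}=a_{i,j}\tilde x_i\tilde x_j$ for all $i,j$. $\Gamma_n$ has $a_{i,j}=1$ for $i<j$; $\gamma\Gamma=(S,\gamma A)$. A weight vector is $\varpi:S\to\mathbb N^*$ and the cloning $\Gamma^\varpi$ has vertices $(i,k)$, $1\le k\le\varpi(i)$, with $a^\varpi_{(i,k),(j,\ell)}=a_{i,j}$. *)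

From HB Require Import structures.
From mathcomp Require Import all_boot all_order all_algebra.
From mathcomp Require Import generic_quotient fraction.
From mathcomp Require Import mpoly.
From mathcomp Require Import complex.
From mathcomp Require Import reals.

Set Implicit Arguments.
Unset Strict Implicit.
Unset Printing Implicit Defensive.

Import GRing.Theory.
Local Open Scope ring_scope.

Section KahanPoisson.
Variables (F : fieldType) (N : nat).

Definition ratfun := {fraction {mpoly F[N]}}.

Definition xvar (k : 'I_N) : ratfun := tofrac ('X_k : {mpoly F[N]}).
Definition cst (c : F) : ratfun := tofrac (c%:MP : {mpoly F[N]}).

Definition fderiv (k : 'I_N) (f : ratfun) : ratfun :=
  let r := repr f in
  tofrac ((mderiv k (\n_r)) * \d_r - \n_r * (mderiv k (\d_r)))
    / tofrac ((\d_r) ^+ 2).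

(* The (log-canonical) Poisson bracket on F(x) attached to a skew-symmetric
   matrix A: the unique biderivation with {x_i,x_j} = a_ij x_i x_j, i.e.
   {f,g} = sum_{k,l} a_kl x_k x_l (df/dx_k) (dg/dx_l). *)
Definition pbracket (A : 'M[F]_N) (f g : ratfun) : ratfun :=
  \sum_(k < N) \sum_(l < N)
     cst (A k l) * xvar k * xvar l * fderiv k f * fderiv l g.

(* xt solves the Kahan equations (step size 1):
   xt_i - x_i = xt_i * sum_j a_ij x_j + x_i * sum_j a_ij xt_j *)
Definition kahan_eqs (A : 'M[F]_N) (xt : 'I_N -> ratfun) : Prop :=
  forall i : 'I_N,
    xt i - xvar i =
      xt i * (\sum_(j < N) cst (A i j) * xvar j)
      + xvar i * (\sum_(j < N) cst (A i j) * xt j).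

Definition skew_symmetric (A : 'M[F]_N) : Prop := A^T = - A.

Definition kahan_poisson (A : 'M[F]_N) : Prop :=
  exists xt : 'I_N -> ratfun,
    [/\ kahan_eqs A xt,
        (forall yt, kahan_eqs A yt -> yt =1 xt) &
        forall i j : 'I_N, pbracket A (xt i) (xt j) = cst (A i j) * xt i * xt j].

End KahanPoisson.

Definition Gamma (F : fieldType) (n : nat) : 'M[F]_n :=
  \matrix_(i < n, j < n) (if (i < j)%N then 1 else if (j < i)%N then -1 else 0).

(* Vertices of the cloned graph Gamma^w: pairs (i,k) with 1 <= k <= w i
   (k is represented 0-based as an element of 'I_(w i)). *)
Definition clone_vertex (n : nat) (w : 'I_n -> nat) : finType :=
  {i : 'I_n & 'I_(w i)}.

(* Cloning, with the vertex set {(i,k)} enumerated as 'I_#|vertices|: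
   a^w_{(i,k),(j,l)} = a_ij. *)
Definition clone (F : fieldType) (n : nat) (w : 'I_n -> nat) (A : 'M[F]_n)
  : 'M[F]_(#|clone_vertex w|) :=
  \matrix_(u, v) A (tag (enum_val u)) (tag (enum_val v)).

Definition scale_graph (F : fieldType) (N : nat) (g : F) (A : 'M[F]_N) : 'M[F]_N :=
  g *: A.

(* Sort the vertices (i, k) of Gamma_n^w by their level i and let P_k be the
   sum of the variables of level < k.  With E_k = 1 - g P_n + 2 g P_k, the
   Kahan equations are solved by x_u E_0 E_n / (E_i E_(i+1)) for u of level i:
   summing the equations over the levels < k expresses the level sums of any
   solution through the P_k, which forces uniqueness.  The bracket of x_u with
   P_a is x_u times g * (a signed combination of level sums depending only on
   the level of u and on a), and {P_a, P_b} = g P_a (P_b - P_a) for a <= b, so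
   the Leibniz rule reduces the Poisson property of the Kahan map to rational
   identities in the P_k.  The E_k do not vanish since they equal 1 at x = 0. *)

From HB Require Import structures.
From mathcomp Require Import all_boot all_order all_algebra.
From mathcomp Require Import generic_quotient fraction.
From mathcomp Require Import mpoly.
From mathcomp Require Import complex.
From mathcomp Require Import reals.
From mathcomp Require Import ring zify.
Import GRing.Theory.
Local Open Scope ring_scope.
Set Implicit Arguments.
Unset Strict Implicit.
Unset Printing Implicit Defensive.

Local Notation "x %:F" := (tofrac x).

Ltac case_ifs := repeat (case: ifP => ?); try (exfalso; lia).

Ltac decide_ifs :=
  repeat match goal with
  | |- context [if ?b then _ else _] =>
      first [ rewrite (_ : b = true); last by lia
            | rewrite (_ : b = false); last by lia ]
  end.

(* [field], then each nonzero side condition is matched, up to [ring],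
   against a hypothesis in context. *)
Ltac field_nz :=
  field; repeat (apply/andP; split);
  match goal with
  | H : is_true (?Y != 0) |- is_true (?X != 0) => have -> : X = Y by ring
  end; assumption.

Section FractionRepr.
Local Open Scope quotient_scope.
Variable R : idomainType.

Lemma pi_fraction (x : {ratio R}) :
  \pi_({fraction R}) x = (\n_x)%:F / (\d_x)%:F.
Proof.
unlock tofrac.
rewrite -[_^-1]/(FracField.inv _) -[_ * _]/(FracField.mul _ _).
rewrite !piE; apply/eqmodP; rewrite /= FracField.equivfE.
rewrite /FracField.mulf /FracField.invf.
have d0 := denom_ratioP x.
by rewrite !numden_Ratio ?oner_neq0 ?mul1r ?mulr1 // mulrC.
Qed.

Lemma fraction_repr (f : {fraction R}) :
  f = (\n_(repr f))%:F / (\d_(repr f))%:F.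
Proof. by rewrite -pi_fraction reprK. Qed.

Lemma fraction_ex (f : {fraction R}) :
  exists2 pq : R * R, pq.2 != 0 & f = pq.1%:F / pq.2%:F.
Proof. by exists (\n_(repr f), \d_(repr f)); [exact: denom_ratioP | exact: fraction_repr]. Qed.

End FractionRepr.

(* The derivative of [a / b], given the derivatives [a'] and [b'] of [a] and [b]. *)
Definition quot_deriv (K : fieldType) (a b a' b' : K) := (a' * b - a * b') / b ^+ 2.

Section QuotientRule.
Variables (K : fieldType) (b d : K).
Hypotheses (b0 : b != 0) (d0 : d != 0).
Implicit Types a c : K.

Lemma quot_derivD a c a' b' c' d' :
  quot_deriv (a * d + c * b) (b * d) (a' * d + a * d' + (c' * b + c * b')) (b' * d + b * d')
  = quot_deriv a b a' b' + quot_deriv c d c' d'.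
Proof. by rewrite /quot_deriv; field; rewrite b0 d0. Qed.

Lemma quot_derivM a c a' b' c' d' :
  quot_deriv (a * c) (b * d) (a' * c + a * c') (b' * d + b * d')
  = quot_deriv a b a' b' * (c / d) + a / b * quot_deriv c d c' d'.
Proof. by rewrite /quot_deriv; field; rewrite b0 d0. Qed.

End QuotientRule.

(* The quotient rule does not depend on the representative of a fraction. *)
Lemma quot_deriv_numer_compat (R : comNzRingType) (a b p q a' b' p' q' : R) :
  a * q = p * b -> a' * q + a * q' = p' * b + p * b' ->
  (a' * b - a * b') * q ^+ 2 = (p' * q - p * q') * b ^+ 2.
Proof.
move=> e e'.
have -> : (a' * b - a * b') * q ^+ 2 =
  b * q * (a' * q + a * q') - b * q * (p' * b + p * b')
  - (b' * q + b * q') * (a * q) + (b' * q + b * q') * (p * b)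
  + (p' * q - p * q') * b ^+ 2 by ring.
by rewrite e e' subrr sub0r addNr add0r.
Qed.

Section RationalDerivative.
Variables (F : fieldType) (N : nat).
Local Notation K := (ratfun F N).
Implicit Types (k : 'I_N) (f h : K).

Lemma fderiv_frac k (p q : {mpoly F[N]}) : q != 0 ->
  fderiv k (p%:F / q%:F) =
  quot_deriv p%:F q%:F (mderiv k p)%:F (mderiv k q)%:F.
Proof.
move=> q0; rewrite /fderiv /quot_deriv; set r := repr _.
have bF : (\d_r)%:F != 0 :> K by rewrite tofrac_eq0 denom_ratioP.
have qF : q%:F != 0 :> K by rewrite tofrac_eq0.
have e : \n_r * q = p * \d_r.
  apply/eqP; rewrite -tofrac_eq !tofracM; apply/eqP.
  by rewrite -[(\n_r)%:F](divfK bF) -fraction_repr mulrAC (divfK qF).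
have e' := congr1 (mderiv k) e; rewrite !mderivM in e'.
have eF := congr1 (@tofrac _) e; have e'F := congr1 (@tofrac _) e'.
rewrite !(tofracD, tofracM) in eF e'F.
apply/eqP; rewrite eqr_div ?tofrac_eq0 ?expf_neq0 ?denom_ratioP //.
by rewrite !(tofracB, tofracM, tofracXn) (quot_deriv_numer_compat eF e'F).
Qed.

Lemma fderivD k f h : fderiv k (f + h) = fderiv k f + fderiv k h.
Proof.
have [[a b] /= b0 ->] := fraction_ex f; have [[c d] /= d0 ->] := fraction_ex h.
have bF : b%:F != 0 :> K by rewrite tofrac_eq0.
have dF : d%:F != 0 :> K by rewrite tofrac_eq0.
rewrite (addf_div _ _ bF dF) -!tofracM -tofracD !fderiv_frac ?mulf_neq0 //.
rewrite mderivD !mderivM !(tofracD, tofracM); exact: (@quot_derivD K _ _ bF dF).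
Qed.

Lemma fderivM k f h : fderiv k (f * h) = fderiv k f * h + f * fderiv k h.
Proof.
have [[a b] /= b0 ->] := fraction_ex f; have [[c d] /= d0 ->] := fraction_ex h.
have bF : b%:F != 0 :> K by rewrite tofrac_eq0.
have dF : d%:F != 0 :> K by rewrite tofrac_eq0.
rewrite mulf_div -!tofracM !fderiv_frac ?mulf_neq0 //.
rewrite !mderivM !(tofracD, tofracM); exact: (@quot_derivM K _ _ bF dF).
Qed.

Lemma fderiv_tofrac k (p : {mpoly F[N]}) : fderiv k p%:F = (mderiv k p)%:F.
Proof.
rewrite -[p%:F]divr1 -tofrac1 fderiv_frac ?oner_neq0 // -mpolyC1 mderivC.
by rewrite /quot_deriv tofrac0 tofrac1 mulr0 subr0 mulr1 expr1n divr1.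
Qed.

Lemma fderivC k (c : F) : fderiv k (cst N c) = 0.
Proof. by rewrite fderiv_tofrac mderivC tofrac0. Qed.

Lemma fderivX k (l : 'I_N) : fderiv k (xvar F l) = (l == k)%:R.
Proof.
rewrite fderiv_tofrac mderivX mnm1E.
case: eqP => [->|_]; last by rewrite scale0r tofrac0.
have -> : (U_(k) - U_(k))%MM = 0%MM by apply/mnmP => j; rewrite mnmBE subnn mnm0E.
by rewrite mpolyX0 scale1r tofrac1.
Qed.

End RationalDerivative.

Section Derivation.
Variables (K : fieldType) (d : K -> K).
Hypothesis dD : forall f h, d (f + h) = d f + d h.
Hypothesis dM : forall f h, d (f * h) = d f * h + f * d h.

Lemma derivation0 : d 0 = 0.
Proof. by apply: (addrI (d 0)); rewrite -dD !addr0. Qed.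

Lemma derivation1 : d 1 = 0.
Proof.
have h := dM 1 1; rewrite !mulr1 mul1r in h.
by apply: (addrI (d 1)); rewrite -h addr0.
Qed.

Lemma derivationN f : d (- f) = - d f.
Proof. by apply: (addrI (d f)); rewrite -dD !subrr derivation0. Qed.

Lemma derivationV f : d f^-1 = - d f / f ^+ 2.
Proof.
have [->|f0] := eqVneq f 0; first by rewrite invr0 derivation0 oppr0 mul0r.
have h : d f * f^-1 + f * d f^-1 = 0 by rewrite -dM mulfV ?derivation1.
rewrite -[d f^-1](mulKf f0) (canRL (addKr _) h) addr0.
by field.
Qed.

End Derivation.

Section PoissonBracket.
Variables (F : fieldType) (N : nat) (A : 'M[F]_N).
Local Notation K := (ratfun F N).
Local Notation br := (pbracket A).
Implicit Types f g h : K.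

Lemma pbracketDr f g h : br f (g + h) = br f g + br f h.
Proof.
rewrite /pbracket -big_split; apply: eq_bigr => k _.
by rewrite -big_split; apply: eq_bigr => l _; rewrite fderivD mulrDr.
Qed.

Lemma pbracketMr f g h : br f (g * h) = br f g * h + g * br f h.
Proof.
rewrite /pbracket mulr_suml mulr_sumr -big_split; apply: eq_bigr => k _.
rewrite mulr_suml mulr_sumr -big_split; apply: eq_bigr => l _.
by rewrite fderivM mulrDr mulrA [in X in _ + X]mulrCA.
Qed.

Lemma pbracketCr f (c : F) : br f (cst N c) = 0.
Proof. by rewrite /pbracket big1 // => k _; rewrite big1 // => l _; rewrite fderivC mulr0. Qed.

Lemma pbracketXX (u v : 'I_N) :
  br (xvar F u) (xvar F v) = cst N (A u v) * xvar F u * xvar F v.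
Proof.
rewrite /pbracket (bigD1 u) //= [X in _ + X]big1 => [|k ku]; last first.
  by rewrite big1 // => l _; rewrite fderivX eq_sym (negbTE ku) mulr0 mul0r.
rewrite addr0 (bigD1 v) //= [X in _ + X]big1 => [|l lv]; last first.
  by rewrite !fderivX eqxx eq_sym (negbTE lv) mulr0.
by rewrite !fderivX !eqxx !mulr1 addr0.
Qed.

Lemma pbracket_skew f g : skew_symmetric A -> br g f = - br f g.
Proof.
rewrite /skew_symmetric => skA; rewrite /pbracket [in RHS]exchange_big -sumrN; apply: eq_bigr => k _.
rewrite -sumrN; apply: eq_bigr => l _.
have -> : A k l = - A l k by have := congr1 (fun M : 'M_N => M l k) skA; rewrite !mxE.
rewrite /cst mpolyCN tofracN; ring.
Qed.

End PoissonBracket.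

Definition cmp_sign (R : nzRingType) (i j : nat) : R :=
  if (i < j)%N then 1 else if (j < i)%N then -1 else 0.

Lemma cmp_signC (R : nzRingType) i j : cmp_sign R j i = - cmp_sign R i j.
Proof. by rewrite /cmp_sign; case: ltngtP; rewrite ?opprK ?oppr0. Qed.

(* The value of [\sum_(v | lvl v < l) cmp_sign i (lvl v) * z v] when [P] are
   the level sums of [z] (lemma [sum_cmp_sign_level]). *)
Definition cmp_sign_sum (K : zmodType) (P : nat -> K) (i l : nat) : K :=
  if (i < l)%N then P l - P i.+1 - P i else - P l.

Section LevelSums.
Variables (K : fieldType) (V : finType) (lvl : V -> nat).

Definition level_sum (z : V -> K) k := \sum_(v | (lvl v < k)%N) z v.

Lemma level_sum0 z : level_sum z 0 = 0.
Proof. by rewrite /level_sum big_pred0. Qed.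

Lemma sum_cmp_sign_level z i l :
  \sum_(v | (lvl v < l)%N) cmp_sign K i (lvl v) * z v = cmp_sign_sum (level_sum z) i l.
Proof.
rewrite /cmp_sign_sum /level_sum !(big_mkcond (fun v => (lvl v < _)%N)) /=.
by case: ifP => il; rewrite -?sumrB -?sumrN; apply: eq_bigr => v _;
  rewrite /cmp_sign; case_ifs; ring.
Qed.

Lemma sum_by_level z (h : nat -> K) k :
  \sum_(v | (lvl v < k)%N) z v * h (lvl v) =
  \sum_(0 <= i < k) (level_sum z i.+1 - level_sum z i) * h i.
Proof.
elim: k => [|k IH]; first by rewrite big_pred0 // big_geq.
rewrite big_nat_recr //= -IH /level_sum !(big_mkcond (fun v => (lvl v < _)%N)) /=.
rewrite -sumrB mulr_suml -big_split; apply: eq_bigr => v _ /=.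
case_ifs; try ring.
have -> : lvl v = k by lia.
ring.
Qed.

End LevelSums.

Section KahanFactor.
Variables (K : fieldType) (g : K) (P : nat -> K) (n : nat).

Definition kahan_den k := 1 - g * P n + (g * P k) *+ 2.
Definition kahan_factor i := kahan_den 0 * kahan_den n / (kahan_den i * kahan_den i.+1).

Definition kahan_den_deriv (d : K -> K) k := g * (d (P k) *+ 2 - d (P n)).
Definition kahan_factor_logder (d : K -> K) i :=
  kahan_den_deriv d 0 / kahan_den 0 + kahan_den_deriv d n / kahan_den n
  - kahan_den_deriv d i / kahan_den i - kahan_den_deriv d i.+1 / kahan_den i.+1.

Section Derivative.
Variable d : K -> K.
Hypothesis dD : forall f h, d (f + h) = d f + d h.
Hypothesis dM : forall f h, d (f * h) = d f * h + f * d h.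
Hypothesis dg : d g = 0.

Lemma derivation_kahan_den k : d (kahan_den k) = kahan_den_deriv d k.
Proof.
rewrite /kahan_den /kahan_den_deriv [(g * P k) *+ 2]mulr2n !dD.
by rewrite (derivationN dD) (derivation1 dM) !dM dg; ring.
Qed.

Lemma derivation_kahan_factor i :
  kahan_den 0 != 0 -> kahan_den n != 0 -> kahan_den i != 0 -> kahan_den i.+1 != 0 ->
  d (kahan_factor i) = kahan_factor i * kahan_factor_logder d i.
Proof.
move=> h0 hn hi hi1.
rewrite /kahan_factor /kahan_factor_logder dM (derivationV dD dM) !dM !derivation_kahan_den.
by field; rewrite h0 hn hi hi1.
Qed.

End Derivative.
End KahanFactor.

Section KahanPoissonIdentities.
Variables (K : fieldType) (g : K) (P : nat -> K) (n : nat).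
Local Notation E := (kahan_den g P n).
Local Notation Phi := (kahan_factor g P n).
Local Notation logder := (kahan_factor_logder g P n).
Variable br : K -> K -> K.
Hypothesis brD : forall f a b, br f (a + b) = br f a + br f b.
Hypothesis brM : forall f a b, br f (a * b) = br f a * b + a * br f b.
Hypothesis brg : forall f, br f g = 0.
Hypothesis brC : forall f h, br h f = - br f h.
Hypothesis P0 : P 0 = 0.
Hypothesis brPP : forall a b, br (P a) (P b) =
  g * (if (a <= b)%N then P a * (P b - P a) else - (P b * (P a - P b))).
Hypothesis hE : forall k, (k <= n)%N -> E k != 0.

Lemma pbracket_kahan_factor h k : (k < n)%N -> br h (Phi k) = Phi k * logder (br h) k.
Proof.
by move=> kn; apply: (derivation_kahan_factor (brD h) (brM h) (brg h)); apply: hE; lia.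
Qed.

Lemma pbracket_scaled_level_sum xu i k : (i < n)%N ->
  (forall a, br xu (P a) = xu * (g * cmp_sign_sum P i a)) ->
  br (xu * Phi i) (P k) =
  xu * Phi i * (g * cmp_sign_sum P i k) - xu * (Phi i * logder (br (P k)) i).
Proof. by move=> iN hu; rewrite brC brM (brC xu) hu pbracket_kahan_factor //; ring. Qed.

Lemma pbracket_scaled_lt xu xv i j : (i < j)%N -> (j < n)%N ->
  (forall a, br xu (P a) = xu * (g * cmp_sign_sum P i a)) ->
  (forall a, br xv (P a) = xv * (g * cmp_sign_sum P j a)) ->
  br xu xv = g * xu * xv ->
  br (xu * Phi i) (xv * Phi j) = g * (xu * Phi i) * (xv * Phi j).
Proof.
move=> ij jn hu hv huv; have iN : (i < n)%N by lia.
rewrite brM (brC xv) brM (brC xu) huv !pbracket_kahan_factor //.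
rewrite /kahan_factor_logder /kahan_den_deriv !(pbracket_scaled_level_sum _ iN hu) !hv.
rewrite /kahan_factor_logder /kahan_den_deriv !brPP.
have e0 := hE (leq0n n); have en := hE (leqnn n).
have ei : E i != 0 by apply: hE; lia.
have ei1 : E i.+1 != 0 by apply: hE; lia.
have ej : E j != 0 by apply: hE; lia.
have ej1 : E j.+1 != 0 by apply: hE; lia.
move: e0 en ei ei1 ej ej1; rewrite /cmp_sign_sum /kahan_factor /kahan_den P0.
by case: (eqVneq n j.+1) => [->|nj]; case: (eqVneq j i.+1) => [->|ji];
  decide_ifs; move=> *; field_nz.
Qed.

Lemma pbracket_scaled_eq xu xv i : (i < n)%N ->
  (forall a, br xu (P a) = xu * (g * cmp_sign_sum P i a)) ->
  (forall a, br xv (P a) = xv * (g * cmp_sign_sum P i a)) ->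
  br xu xv = 0 ->
  br (xu * Phi i) (xv * Phi i) = 0.
Proof.
move=> iN hu hv huv.
rewrite brM (brC xv) brM (brC xu) huv !pbracket_kahan_factor //.
rewrite /kahan_factor_logder /kahan_den_deriv !(pbracket_scaled_level_sum _ iN hu) !hv.
rewrite /kahan_factor_logder /kahan_den_deriv !brPP.
have e0 := hE (leq0n n); have en := hE (leqnn n).
have ei : E i != 0 by apply: hE; lia.
have ei1 : E i.+1 != 0 by apply: hE; lia.
move: e0 en ei ei1; rewrite /cmp_sign_sum /kahan_factor /kahan_den.
by case: (eqVneq n i.+1) => [->|ni]; case: (eqVneq i 0) => [->|i0];
  rewrite P0; decide_ifs; move=> *; field_nz.
Qed.

End KahanPoissonIdentities.

Section KahanSolution.
Variables (K : fieldType) (V : finType) (lvl : V -> nat) (n : nat).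
Hypothesis lvl_lt : forall v, (lvl v < n)%N.
Variables (g : K) (x : V -> K).
Local Notation P := (level_sum lvl x).
Local Notation E := (kahan_den g P n).

Definition kahan_system (y : V -> K) := forall u,
  y u - x u = y u * (\sum_v g * cmp_sign K (lvl u) (lvl v) * x v)
              + x u * (\sum_v g * cmp_sign K (lvl u) (lvl v) * y v).

Definition kahan_sol u := x u * kahan_factor g P n (lvl u).

Definition kahan_level_sum k := P k * (1 + g * P n) / E k.

Hypothesis hE : forall k, (k <= n)%N -> E k != 0.

Lemma sum_cmp_sign_all z u :
  \sum_v g * cmp_sign K (lvl u) (lvl v) * z v =
  g * (level_sum lvl z n - level_sum lvl z (lvl u).+1 - level_sum lvl z (lvl u)).
Proof.
rewrite (eq_bigl (fun v => lvl v < n)%N) => [|v]; last by rewrite lvl_lt.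
rewrite (eq_bigr (fun v => g * (cmp_sign K (lvl u) (lvl v) * z v))) => [|v _]; last by rewrite mulrA.
by rewrite -mulr_sumr sum_cmp_sign_level /cmp_sign_sum lvl_lt.
Qed.

Lemma level_sum_kahan_sol k : (k <= n)%N -> level_sum lvl kahan_sol k = kahan_level_sum k.
Proof.
move=> kn; rewrite /level_sum /kahan_sol (sum_by_level lvl x (kahan_factor g P n)).
rewrite (@telescope_sumr_eq _ 0 k kahan_level_sum) // => [|i /andP [_ ik]].
  by rewrite /kahan_level_sum level_sum0 !mul0r subr0.
have e0 := hE (leq0n n); have en := hE (leqnn n).
have ei : E i != 0 by apply: hE; lia.
have ei1 : E i.+1 != 0 by apply: hE; lia.
move: e0 en ei ei1; rewrite /kahan_level_sum /kahan_factor /kahan_den level_sum0.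
by move=> *; field_nz.
Qed.

Lemma kahan_sol_system : kahan_system kahan_sol.
Proof.
move=> u; have lu := lvl_lt u.
rewrite !sum_cmp_sign_all !level_sum_kahan_sol; try lia.
have e0 := hE (leq0n n); have en := hE (leqnn n).
have ei : E (lvl u) != 0 by apply: hE; lia.
have ei1 : E (lvl u).+1 != 0 by apply: hE; lia.
move: e0 en ei ei1; rewrite /kahan_sol /kahan_level_sum /kahan_factor /kahan_den level_sum0.
by move=> *; field_nz.
Qed.

Section Uniqueness.
Variable y : V -> K.
Hypothesis hy : kahan_system y.
Local Notation Y := (level_sum lvl y).

(* Summing the Kahan equations over the vertices of level < k telescopes. *)
Lemma kahan_system_level_sum k :
  Y k - P k = g * (Y k * P n + P k * Y n - (Y k * P k) *+ 2).
Proof.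
have S : Y k - P k = \sum_(v | (lvl v < k)%N)
    (y v * (g * (P n - P (lvl v).+1 - P (lvl v))) + x v * (g * (Y n - Y (lvl v).+1 - Y (lvl v)))).
  by rewrite /level_sum -sumrB; apply: eq_bigr => v _; rewrite hy !sum_cmp_sign_all.
have G1 := sum_by_level lvl y (fun i => g * (P n - P i.+1 - P i)) k.
have G2 := sum_by_level lvl x (fun i => g * (Y n - Y i.+1 - Y i)) k.
rewrite /= in G1 G2; rewrite S big_split /= G1 G2 -big_split /=.
pose Fn i := g * (Y i * P n + P i * Y n - (Y i * P i) *+ 2).
rewrite (@telescope_sumr_eq _ 0 k Fn) // => [|i _]; last by rewrite /Fn; ring.
by rewrite /Fn !level_sum0; ring.
Qed.

Lemma kahan_system_total : Y n = P n.
Proof.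
apply/eqP; rewrite -subr_eq0 kahan_system_level_sum.
by apply/eqP; ring.
Qed.

Lemma kahan_system_level_sumE k : (k <= n)%N -> Y k = kahan_level_sum k.
Proof.
move=> kn; apply: (mulIf (hE kn)); rewrite /kahan_level_sum divfK ?hE //.
apply/eqP; rewrite -subr_eq0.
have -> : Y k * E k - P k * (1 + g * P n) =
    (Y k - P k) - g * (Y k * P n + P k * Y n - (Y k * P k) *+ 2).
  by rewrite /kahan_den kahan_system_total; ring.
by rewrite kahan_system_level_sum subrr.
Qed.

Hypothesis hD : forall i, (i < n)%N -> 1 - g * (P n - P i.+1 - P i) != 0.

Lemma kahan_system_unique u : y u = kahan_sol u.
Proof.
have lu := lvl_lt u.
have hyu := hy u; rewrite !sum_cmp_sign_all kahan_system_total in hyu.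
rewrite !kahan_system_level_sumE in hyu; try lia.
have {}hyu : y u * (1 - g * (P n - P (lvl u).+1 - P (lvl u))) =
    x u * (1 + g * (P n - kahan_level_sum (lvl u).+1 - kahan_level_sum (lvl u))).
  by apply/eqP; rewrite -subr_eq0 -(subrr (y u - x u)) {2}hyu; apply/eqP; ring.
apply: (mulIf (hD lu)); rewrite hyu.
have e0 := hE (leq0n n); have en := hE (leqnn n).
have ei : E (lvl u) != 0 by apply: hE; lia.
have ei1 : E (lvl u).+1 != 0 by apply: hE; lia.
move: e0 en ei ei1; rewrite /kahan_sol /kahan_level_sum /kahan_factor /kahan_den level_sum0.
by move=> *; field_nz.
Qed.

End Uniqueness.
End KahanSolution.

Section LevelSumBrackets.
Variables (K : fieldType) (V : finType) (lvl : V -> nat) (x : V -> K) (g : K).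
Variable br : K -> K -> K.
Hypothesis brD : forall f a b, br f (a + b) = br f a + br f b.
Hypothesis brC : forall f h, br h f = - br f h.
Hypothesis brXX : forall u v, br (x u) (x v) = g * cmp_sign K (lvl u) (lvl v) * x u * x v.
Local Notation P := (level_sum lvl x).

Lemma pbracket_sumr f I (r : seq I) (Q : pred I) (G : I -> K) :
  br f (\sum_(i <- r | Q i) G i) = \sum_(i <- r | Q i) br f (G i).
Proof. exact: (big_morph (br f) (brD f) (derivation0 (brD f))). Qed.

Lemma pbracket_suml h I (r : seq I) (Q : pred I) (G : I -> K) :
  br (\sum_(i <- r | Q i) G i) h = \sum_(i <- r | Q i) br (G i) h.
Proof.
rewrite brC pbracket_sumr -sumrN; apply: eq_bigr => i _.
by rewrite brC opprK.
Qed.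

Lemma pbracket_var_level_sum u l : br (x u) (P l) = x u * (g * cmp_sign_sum P (lvl u) l).
Proof.
rewrite {1}/level_sum pbracket_sumr.
rewrite (eq_bigr (fun v => x u * (g * (cmp_sign K (lvl u) (lvl v) * x v)))) => [|v _].
  by rewrite -!mulr_sumr sum_cmp_sign_level.
by rewrite brXX; ring.
Qed.

Lemma pbracket_level_sums_le a b : (a <= b)%N -> br (P a) (P b) = g * (P a * (P b - P a)).
Proof.
move=> ab; rewrite {1}/level_sum pbracket_suml.
rewrite (eq_bigr (fun u => x u * (g * cmp_sign_sum P (lvl u) b))) => [|u _]; last first.
  exact: pbracket_var_level_sum.
rewrite (sum_by_level lvl x (fun i => g * cmp_sign_sum P i b)).
rewrite (@telescope_sumr_eq _ 0 a (fun i => g * (P i * P b - P i * P i))) // => [|i /andP [_ ia]].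
  by rewrite level_sum0; ring.
by rewrite /cmp_sign_sum ifT; [ring | lia].
Qed.

Lemma pbracket_level_sums a b : br (P a) (P b) =
  g * (if (a <= b)%N then P a * (P b - P a) else - (P b * (P a - P b))).
Proof.
case: leqP => ab; first exact: pbracket_level_sums_le.
by rewrite brC pbracket_level_sums_le ?mulrN // ltnW.
Qed.

End LevelSumBrackets.

Section ScaledClonedGamma.
Variables (F : fieldType) (n : nat) (w : 'I_n -> nat) (g : F).
Local Notation N := #|clone_vertex w|.
Local Notation K := (ratfun F N).
Local Notation A := (scale_graph g (clone w (Gamma F n))).
Local Notation x := (@xvar F N).
Local Notation gK := (cst N g).

Definition clone_level (u : 'I_N) : nat := tag (enum_val u).
Local Notation P := (level_sum clone_level x).

Lemma clone_level_lt u : (clone_level u < n)%N.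
Proof. exact: ltn_ord. Qed.

Lemma scaled_clone_GammaE u v : A u v = g * cmp_sign F (clone_level u) (clone_level v).
Proof. by rewrite !mxE. Qed.

Lemma scaled_clone_Gamma_skew : skew_symmetric A.
Proof.
by apply/matrixP => u v; rewrite mxE [RHS]mxE !scaled_clone_GammaE cmp_signC mulrN.
Qed.

Lemma cst_scaled_clone_Gamma u v :
  cst N (A u v) = gK * cmp_sign K (clone_level u) (clone_level v).
Proof.
rewrite scaled_clone_GammaE /cst mpolyCM tofracM /cmp_sign.
by case: ifP => _; [|case: ifP => _]; rewrite ?mpolyCN ?mpolyC1 ?tofracN ?tofrac1 ?mpolyC0 ?tofrac0.
Qed.

(* Every denominator below is [1 + f] with [f] vanishing at [x = 0]. *)
Definition vanishes_at0 (f : K) :=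
  exists2 p : {mpoly F[N]}, f = p%:F & p.@[fun _ => 0] = 0.

Lemma vanishes_at00 : vanishes_at0 0.
Proof. by exists 0; rewrite ?tofrac0 ?meval0. Qed.

Lemma vanishes_at0D f h : vanishes_at0 f -> vanishes_at0 h -> vanishes_at0 (f + h).
Proof.
move=> [p -> hp] [q -> hq]; exists (p + q); first by rewrite tofracD.
by rewrite mevalD hp hq addr0.
Qed.

Lemma vanishes_at0N f : vanishes_at0 f -> vanishes_at0 (- f).
Proof. by move=> [p -> hp]; exists (- p); rewrite ?tofracN ?mevalN ?hp ?oppr0. Qed.

Lemma vanishes_at0Cl (c : F) f : vanishes_at0 f -> vanishes_at0 (cst N c * f).
Proof. by move=> [p -> hp]; exists (c%:MP * p); rewrite ?tofracM // mevalM hp mulr0. Qed.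

Lemma vanishes_at0_level_sum k : vanishes_at0 (P k).
Proof.
apply: big_ind => [|f h|v _]; [exact: vanishes_at00 | exact: vanishes_at0D |].
by exists 'X_v; rewrite ?mevalXU.
Qed.

Lemma vanishes_at0_add1_neq0 f : vanishes_at0 f -> 1 + f != 0.
Proof.
move=> [p -> hp]; rewrite -tofrac1 -tofracD tofrac_eq0; apply/negP => /eqP h.
have := congr1 (meval (fun _ => 0)) h; rewrite mevalD meval1 hp addr0 meval0 => /eqP.
by rewrite oner_eq0.
Qed.

Lemma kahan_den_clone_neq0 k : kahan_den gK P n k != 0.
Proof.
rewrite /kahan_den -addrA mulr2n; apply: vanishes_at0_add1_neq0.
by do !apply: vanishes_at0D; do ?apply: vanishes_at0N; apply: vanishes_at0Cl;
  apply: vanishes_at0_level_sum.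
Qed.

Lemma kahan_pivot_clone_neq0 i : 1 - gK * (P n - P i.+1 - P i) != 0.
Proof.
apply/vanishes_at0_add1_neq0/vanishes_at0N/vanishes_at0Cl.
by do !apply: vanishes_at0D; do ?apply: vanishes_at0N; apply: vanishes_at0_level_sum.
Qed.

Lemma sum_cst_scaled_clone_Gamma z u :
  \sum_j cst N (A u j) * z j = \sum_j gK * cmp_sign K (clone_level u) (clone_level j) * z j.
Proof. by apply: eq_bigr => j _; rewrite cst_scaled_clone_Gamma. Qed.

Lemma pbracket_clone_vars u v :
  pbracket A (x u) (x v) = gK * cmp_sign K (clone_level u) (clone_level v) * x u * x v.
Proof. by rewrite pbracketXX cst_scaled_clone_Gamma. Qed.

Lemma pbracket_clone_skew f h : pbracket A h f = - pbracket A f h.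
Proof. exact: pbracket_skew scaled_clone_Gamma_skew. Qed.

Local Notation xt := (kahan_sol clone_level n gK x).

Lemma pbracket_kahan_sol_clone u v :
  pbracket A (xt u) (xt v) = cst N (A u v) * xt u * xt v.
Proof.
have brg f : pbracket A f gK = 0 by exact: pbracketCr.
have brPP := pbracket_level_sums (pbracketDr A) pbracket_clone_skew pbracket_clone_vars.
have brXP := pbracket_var_level_sum (pbracketDr A) pbracket_clone_vars.
have hE k (_ : (k <= n)%N) := kahan_den_clone_neq0 k.
rewrite cst_scaled_clone_Gamma /kahan_sol /cmp_sign; case: ltngtP => luv.
- rewrite (pbracket_scaled_lt (pbracketDr A) (pbracketMr A) brg pbracket_clone_skew
    (level_sum0 _ _) brPP hE luv (clone_level_lt v) (brXP u) (brXP v)) ?mulr1 //.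
  by rewrite pbracket_clone_vars /cmp_sign luv mulr1.
- rewrite pbracket_clone_skew (pbracket_scaled_lt (pbracketDr A) (pbracketMr A) brg
    pbracket_clone_skew (level_sum0 _ _) brPP hE luv (clone_level_lt u) (brXP v) (brXP u)).
    by rewrite mulrN1 !mulNr mulrAC.
  by rewrite pbracket_clone_vars /cmp_sign luv mulr1.
- have huv : pbracket A (x u) (x v) = 0.
    by rewrite pbracket_clone_vars /cmp_sign luv ltnn mulr0 !mul0r.
  have hv a : pbracket A (x v) (P a) = x v * (gK * cmp_sign_sum P (clone_level u) a).
    by rewrite brXP luv.
  by rewrite mulr0 !mul0r -luv (pbracket_scaled_eq (pbracketDr A) (pbracketMr A) brg
    pbracket_clone_skew (level_sum0 _ _) brPP hE (clone_level_lt u) (brXP u) hv huv).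
Qed.

Theorem kahan_poisson_scaled_clone_Gamma : kahan_poisson A.
Proof.
have hE k (_ : (k <= n)%N) := kahan_den_clone_neq0 k.
exists xt; split=> [u|y hy u|u v]; last exact: pbracket_kahan_sol_clone.
- by rewrite !sum_cst_scaled_clone_Gamma; apply: (kahan_sol_system clone_level_lt hE).
- apply: (kahan_system_unique clone_level_lt hE) => [v|i _].
    by rewrite -!sum_cst_scaled_clone_Gamma; apply: hy.
  exact: kahan_pivot_clone_neq0.
Qed.

End ScaledClonedGamma.

Theorem corollary2p4 (R : realType) :
  (forall (n : nat) (w : 'I_n -> nat) (g : R),
      (0 < n)%N -> (forall i, (0 < w i)%N) -> g != 0 ->
      kahan_poisson (scale_graph g (clone w (Gamma R n))))
  /\
  (forall (n : nat) (w : 'I_n -> nat) (g : R[i]),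
      (0 < n)%N -> (forall i, (0 < w i)%N) -> g != 0 ->
      kahan_poisson (scale_graph g (clone w (Gamma R[i] n)))).
Proof.
by split=> n w g _ _ _; apply: kahan_poisson_scaled_clone_Gamma.
Qed.
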